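(* Assume $\gamma$-separability. Fix $h\in\{2,\dots,H+1\}$ and let $\nu$ be a distribution on $\mathcal{S}_{h-1}\times\mathcal{A}$ with $\nu(s,a)\ge\tau$ for all $(s,a)\in\mathcal{S}_{h-1}\times\mathcal{A}$, where $\tau>0$. Then for any distinct $s_1',s_2'\in\mathcal{S}_h$ (each reachable from some pair in $\mathcal{S}_{h-1}\times\mathcal{A}$), $$\|\mathbf{b}_\nu(s_1')-\mathbf{b}_\nu(s_2')\|_1\ge\frac{\tau\gamma}{2}.$$
   Context: In a block MDP with finite latent levels $\mathcal{S}_1,\dots,\mathcal{S}_{H+1}$, finite action set $\mathcal{A}$ with $|\mathcal{A}|=K$, $|\mathcal{S}_h|\le M$, and transition kernel $p(s'\mid s,a)$ (with $p(\cdot\mid s,a)$ supported on $\mathcal{S}_{h}$ for $s\in\mathcal{S}_{h-1}$): for a distribution $\nu$ on $\mathcal{S}_{h-1}\times\mathcal{A}$ and $s'\in\mathcal{S}_h$, $b_\nu(s,a\mid s')=\frac{p(s'\mid s,a)\nu(s,a)}{\sum_{\tilde s,\tilde a}p(s'\mid\tilde s,\tilde a)\nu(\tilde s,\tilde a)}$, and $\mathbf{b}_\nu(s')\in\mathbb{R}^{MK}$ is the vector of these values indexed by $(s,a)\in\mathcal{S}_{h-1}\times\mathcal{A}$, zero-padded. $\gamma$-separability: there is $\gamma>0$ such that for every $h\in\{2,\dots,H+1\}$ and distinct $s',s''\in\mathcal{S}_h$, $\|\mathbf{b}_U(s')-\mathbf{b}_U(s'')\|_1\ge\gamma$, where $U$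 is the uniform distribution on $\mathcal{S}_{h-1}\times\mathcal{A}$. *)

From HB Require Import structures.
From mathcomp Require Import all_boot all_order all_algebra.
Set Implicit Arguments. Unset Strict Implicit. Unset Printing Implicit Defensive.
Import Order.TTheory GRing.Theory Num.Theory.
Local Open Scope ring_scope.

(* Convention: the latent levels are S 1, ..., S (H+1) (S : nat -> finType);
   p k s a s' is the transition probability p(s' | s, a) from s : S k to
   s' : S k.+1.  The paper's level h corresponds to k.+1 here (k = h - 1). *)

Section BlockMDP.
Variables (R : realFieldType) (S : nat -> finType) (A : finType).
Variable p : forall k : nat, S k -> A -> S k.+1 -> R.

Definition bwd (k : nat) (nu : S k -> A -> R) (s' : S k.+1) (s : S k) (a : A) : R :=
  p s a s' * nu s a / (\sum_(t : S k) \sum_(c : A) p t c s' * nu t c).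

(* ||b_nu(s1') - b_nu(s2')||_1 : l1 norm of the (zero-padded) vectors
   indexed by S k x A; the padding coordinates contribute 0. *)
Definition bdist (k : nat) (nu : S k -> A -> R) (s1 s2 : S k.+1) : R :=
  \sum_(s : S k) \sum_(a : A) `|bwd nu s1 s a - bwd nu s2 s a|.

Definition unif (k : nat) : S k -> A -> R :=
  fun _ _ => (#|S k| * #|A|)%:R^-1.

Definition reachable (k : nat) (s' : S k.+1) : Prop :=
  exists (s : S k) (a : A), 0 < p s a s'.

Definition is_kernel (H : nat) : Prop :=
  forall k, (1 <= k <= H)%N ->
    (forall (s : S k) (a : A) (s' : S k.+1), 0 <= p s a s') /\ (forall s a, \sum_(s' : S k.+1) p s a s' = 1).

Definition separable (H : nat) (gamma : R) : Prop :=
  0 < gamma /\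
  forall k, (1 <= k <= H)%N -> forall s1 s2 : S k.+1,
    s1 != s2 -> reachable s1 -> reachable s2 -> gamma <= bdist (@unif k) s1 s2.

Definition is_distr (k : nat) (nu : S k -> A -> R) : Prop :=
  (forall s a, 0 <= nu s a) /\ \sum_(s : S k) \sum_(a : A) nu s a = 1.

End BlockMDP.

(* The backward distribution b_nu(s') is the normalisation of the column
   P(s,a) := p(s' | s,a) reweighted by nu, and b_U(s') is the normalisation of
   P itself because U is constant.  So it suffices to show that reweighting two
   probability vectors x, y by weights nu in [tau, 1] and renormalising shrinks
   their l1 distance by at most the factor tau / 2.  If be := <y, nu> <= <x, nu>
   =: al and c := be / al, then the reweighted difference is, coordinatewise,
   nu / be * (c x - y), of total mass at least tau * sum |c x - y|; on the other
   hand sum |x - y| <= (1 - c) + sum |c x - y| <= 2 sum |c x - y|. *)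

From HB Require Import structures.
From mathcomp Require Import all_boot all_order all_algebra.
From mathcomp Require Import ring lra.
Set Implicit Arguments. Unset Strict Implicit. Unset Printing Implicit Defensive.
Import Order.TTheory GRing.Theory Num.Theory.
Local Open Scope ring_scope.

Section Normalize.
Variables (R : realFieldType) (T : finType).
Implicit Types (x y P nu : T -> R) (c tau : R).

Definition normalize x : T -> R := fun i => x i / \sum_j x j.

Definition l1dist x y : R := \sum_i `|x i - y i|.

Lemma l1distC x y : l1dist x y = l1dist y x.
Proof. by apply: eq_bigr => i _; rewrite distrC. Qed.

Lemma eq_l1dist x x' y y' :
  x =1 x' -> y =1 y' -> l1dist x y = l1dist x' y'.
Proof. by move=> ex ey; apply: eq_bigr => i _; rewrite ex ey. Qed.

Lemma ler_term_sum x i : (forall j, 0 <= x j) -> x i <= \sum_j x j.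
Proof. by move=> x0; rewrite (bigD1 i) //= lerDl sumr_ge0. Qed.

Lemma eq_normalize x y : x =1 y -> normalize x =1 normalize y.
Proof. by move=> exy i; rewrite /normalize exy (eq_bigr _ (fun j _ => exy j)). Qed.

Lemma normalizeZ c x : c != 0 -> normalize (fun i => c * x i) =1 normalize x.
Proof.
move=> c0 i; rewrite /normalize -mulr_sumr invfM.
by rewrite mulrACA divff // mul1r.
Qed.

Lemma normalize_ge0 x i : (forall j, 0 <= x j) -> 0 <= normalize x i.
Proof. by move=> x0; rewrite divr_ge0 ?sumr_ge0. Qed.

Lemma sum_normalize x : \sum_j x j != 0 -> \sum_i normalize x i = 1.
Proof. by move=> sx0; rewrite -mulr_suml divff. Qed.

Lemma weighted_sum_ge y nu tau :
  (forall i, 0 <= y i) -> \sum_i y i = 1 -> (forall i, tau <= nu i) ->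
  tau <= \sum_i y i * nu i.
Proof.
move=> y0 sy tau_nu; rewrite -[tau]mulr1 -sy mulr_sumr.
by apply: ler_sum => i _; rewrite mulrC ler_wpM2l.
Qed.

Lemma weighted_sum_le1 y nu :
  (forall i, 0 <= y i) -> \sum_i y i = 1 -> (forall i, nu i <= 1) ->
  \sum_i y i * nu i <= 1.
Proof.
move=> y0 sy nu1; rewrite -sy; apply: ler_sum => i _.
by rewrite -[leRHS]mulr1 ler_wpM2l.
Qed.

Section ProbabilityVectors.
Variables (x y nu : T -> R) (tau : R).
Hypotheses (x0 : forall i, 0 <= x i) (y0 : forall i, 0 <= y i).
Hypotheses (sx : \sum_i x i = 1) (sy : \sum_i y i = 1).
Hypotheses (tau0 : 0 < tau) (tau_nu : forall i, tau <= nu i).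
Hypothesis (nu1 : forall i, nu i <= 1).

Let al := \sum_i x i * nu i.
Let be := \sum_i y i * nu i.
Let c := be / al.

Lemma l1dist_le_scaled_mismatch :
  c <= 1 -> l1dist x y <= 2 * \sum_i `|c * x i - y i|.
Proof.
move=> c1; set Sm := \sum_i _.
have mass_gap : 1 - c <= Sm.
  have -> : 1 - c = \sum_i (y i - c * x i).
    by rewrite sumrB -mulr_sumr sx sy mulr1.
  by apply: ler_sum => i _; rewrite distrC ler_norm.
suff : l1dist x y <= (1 - c) + Sm by lra.
have -> : 1 - c = \sum_i (1 - c) * x i by rewrite -mulr_sumr sx mulr1.
rewrite -big_split /=; apply: ler_sum => i _.
have -> : x i - y i = (1 - c) * x i + (c * x i - y i) by ring.
by apply: (le_trans (ler_normD _ _)); rewrite ger0_norm ?mulr_ge0 ?subr_ge0.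
Qed.

Lemma normalize_weighted_diff i :
  0 < al -> 0 < be ->
  normalize (fun j => x j * nu j) i - normalize (fun j => y j * nu j) i
  = nu i / be * (c * x i - y i).
Proof.
by move=> al0 be0; rewrite /normalize -/al -/be /c; field; rewrite !lt0r_neq0.
Qed.

Lemma l1dist_reweight_le : be <= al ->
  tau * l1dist x y / 2 <=
  l1dist (normalize (fun i => x i * nu i)) (normalize (fun i => y i * nu i)).
Proof.
move=> le_be_al.
have tau_be : tau <= be by apply: weighted_sum_ge.
have be1 : be <= 1 by apply: weighted_sum_le1.
have be0 : 0 < be := lt_le_trans tau0 tau_be.
have al0 : 0 < al := lt_le_trans be0 le_be_al.
have c1 : c <= 1 by rewrite ler_pdivrMr // mul1r.
set Sm := \sum_i `|c * x i - y i|.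
have Sm0 : 0 <= Sm by rewrite sumr_ge0.
apply: (@le_trans _ _ (tau * Sm)).
  rewrite -mulrA ler_pM2l // ler_pdivrMr // mulrC.
  exact: l1dist_le_scaled_mismatch.
apply: (@le_trans _ _ (tau / be * Sm)).
  apply: ler_wpM2r => //; rewrite ler_pdivlMr //.
  by apply: ler_piMr => //; exact: ltW.
rewrite /l1dist mulr_sumr; apply: ler_sum => i _.
have nu_be_ge0 : 0 <= nu i / be by rewrite divr_ge0 ?ltW // (lt_le_trans tau0).
rewrite normalize_weighted_diff // normrM ger0_norm //.
apply: ler_wpM2r => //; apply: ler_wpM2r => //.
by rewrite invr_ge0 ltW.
Qed.

End ProbabilityVectors.

Lemma l1dist_reweight_prob x y nu tau :
  (forall i, 0 <= x i) -> (forall i, 0 <= y i) ->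
  \sum_i x i = 1 -> \sum_i y i = 1 ->
  0 < tau -> (forall i, tau <= nu i) -> (forall i, nu i <= 1) ->
  tau * l1dist x y / 2 <=
  l1dist (normalize (fun i => x i * nu i)) (normalize (fun i => y i * nu i)).
Proof.
move=> x0 y0 sx sy tau0 tau_nu nu1.
have [le_yx | lt_xy] := lerP (\sum_i y i * nu i) (\sum_i x i * nu i).
  exact: l1dist_reweight_le.
by rewrite l1distC [X in _ <= X]l1distC l1dist_reweight_le // ltW.
Qed.

Lemma normalize_reweight_normalize P nu : \sum_j P j != 0 ->
  normalize (fun i => normalize P i * nu i) =1 normalize (fun i => P i * nu i).
Proof.
move=> sP0 i; rewrite -(normalizeZ (fun i => P i * nu i) (invr_neq0 sP0) i).
by apply: eq_normalize => j; rewrite /normalize mulrAC mulrC.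
Qed.

Lemma l1dist_reweight P1 P2 nu tau :
  (forall i, 0 <= P1 i) -> (forall i, 0 <= P2 i) ->
  0 < \sum_i P1 i -> 0 < \sum_i P2 i ->
  0 < tau -> (forall i, tau <= nu i) -> (forall i, nu i <= 1) ->
  tau * l1dist (normalize P1) (normalize P2) / 2 <=
  l1dist (normalize (fun i => P1 i * nu i)) (normalize (fun i => P2 i * nu i)).
Proof.
move=> P10 P20 sP1 sP2 tau0 tau_nu nu1.
rewrite -(eq_l1dist (normalize_reweight_normalize nu (lt0r_neq0 sP1))
                   (normalize_reweight_normalize nu (lt0r_neq0 sP2))).
by apply: l1dist_reweight_prob => // [i|i||];
  rewrite ?normalize_ge0 ?sum_normalize ?lt0r_neq0.
Qed.

End Normalize.

Section BackwardDistribution.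
Variables (R : realFieldType) (S : nat -> finType) (A : finType).
Variable p : forall k : nat, S k -> A -> S k.+1 -> R.

Lemma bdistE k (nu : S k -> A -> R) (s1 s2 : S k.+1) :
  bdist p nu s1 s2 =
  l1dist (normalize (fun u : S k * A => p u.1 u.2 s1 * nu u.1 u.2))
         (normalize (fun u : S k * A => p u.1 u.2 s2 * nu u.1 u.2)).
Proof. by rewrite /bdist /bwd /l1dist /normalize !pair_bigA. Qed.

Lemma bdist_unif k (s1 s2 : S k.+1) : reachable p s1 ->
  bdist p (unif R (S:=S) (A:=A) (k:=k)) s1 s2 =
  l1dist (normalize (fun u : S k * A => p u.1 u.2 s1))
         (normalize (fun u : S k * A => p u.1 u.2 s2)).
Proof.
move=> [s [a _]]; rewrite bdistE.
have unif_neq0 : (#|S k| * #|A|)%:R^-1 != 0 :> R.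
  by rewrite invr_eq0 pnatr_eq0 muln_eq0 negb_or -!lt0n; apply/andP; split;
    apply/card_gt0P; [exists s | exists a].
by apply: eq_l1dist => u; rewrite -[in RHS](normalizeZ _ unif_neq0);
  apply: eq_normalize => v; rewrite mulrC.
Qed.

Lemma sum_column_gt0 k (s' : S k.+1) :
  (forall s a, 0 <= p s a s') -> reachable p s' ->
  0 < \sum_(u : S k * A) p u.1 u.2 s'.
Proof.
move=> p_ge0 [s [a p_pos]]; apply: lt_le_trans p_pos _.
by apply: (@ler_term_sum _ _ (fun u : S k * A => p u.1 u.2 s') (s, a)) => -[].
Qed.

Lemma distr_le1 k (nu : S k -> A -> R) s a : is_distr nu -> nu s a <= 1.
Proof.
move=> [nu_ge0 <-]; rewrite pair_bigA.
by apply: (@ler_term_sum _ _ (fun u : S k * A => nu u.1 u.2) (s, a)) => -[].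
Qed.

End BackwardDistribution.

Theorem lemma6 (R : realFieldType) (S : nat -> finType) (A : finType)
    (H M K : nat) (p : forall k : nat, S k -> A -> S k.+1 -> R) (gamma : R)
    (hA : #|A| = K) (hM : forall k, (1 <= k <= H.+1)%N -> (#|S k| <= M)%N)
    (hp : is_kernel p H) (hsep : separable p H gamma)
    (k : nat) (hk : (1 <= k <= H)%N)
    (nu : S k -> A -> R) (tau : R) (htau : 0 < tau)
    (hnu : is_distr nu) (hnutau : forall s a, tau <= nu s a)
    (s1 s2 : S k.+1) (hs12 : s1 != s2)
    (hr1 : reachable p s1) (hr2 : reachable p s2) :
  tau * gamma / 2 <= bdist p nu s1 s2.
Proof.
have [p_ge0 _] := hp k hk.
have [_ sep] := hsep.
have := sep k hk s1 s2 hs12 hr1 hr2; rewrite bdist_unif // => sep12.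
rewrite bdistE; apply: le_trans (l1dist_reweight _ _ _ _ htau _ _) => //.
- apply: ler_wpM2r; first by rewrite invr_ge0.
  by apply: ler_wpM2l => //; exact: ltW.
- exact: sum_column_gt0.
- exact: sum_column_gt0.
- by move=> u; exact: distr_le1 hnu.
Qed.
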